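(* Let $L$ be a $c$-lattice and $S$ a multiplicatively closed subset of $L$ (with $1\in S$, $0\notin S$). Let $q$ be an $S$-$p$-primary element of $L$ and let $x\in L$ be such that $sx\not\le q$ for all $s\in S$. Then $(q:sx)$ is an $S$-primary element of $L$ for every $s\in S$, and there exists $t\in S$ such that $t\sqrt{(q:sx)}\le p\le\sqrt{(q:sx)}$ for all $s\in S$. In particular, $(\sqrt{(q:x)})_S=p_S$.
   Context: A multiplicative lattice is a complete lattice with a commutative, associative multiplication distributing over arbitrary joins, with $1$ as identity; $L_*$ is the set of compact elements. A $c$-lattice is a compactly generated multiplicative lattice with $1$ compact in which the product of two compact elements is compact. A multiplicatively closed subset is a nonempty $S\subseteq L_*$ closed under multiplication. $(a:b)=\bigvee\{y\mid yb\le a\}$; $\sqrt a=\bigvee\{y\in L_*\mid y^n\le a\text{ for some }n\in\mathbb{Z}^+\}$; the $S$-saturation is $a_S=\bigvee\{y\in L\mid sy\le a\text{ for some }s\in S\}$. A proper element $p$ with $t\not\le p$ for all $t\in S$ is $S$-prime if there is $s\in S$ such that $ab\le p$ implies $sa\le p$ or $sb\le p$ for all $a,b$. A proper element $q$ with $t\not\le q$ for all $t\in S$ is $S$-primary if there is $s\in S$ such that $cd\le q$ implies $sc\le q$ or $sd\le\sqrt q$ for all $c,d\in L$; it is $S$-$p$-primary if moreover $p=\sqrt q$ is $S$-prime. *)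

From Stdlib Require Import List.
Set Implicit Arguments.

Record MultLattice := {
  car :> Type;
  le : car -> car -> Prop;
  sup : (car -> Prop) -> car;
  mul : car -> car -> car;
  le_refl : forall a, le a a;
  le_trans : forall a b c, le a b -> le b c -> le a c;
  le_antisym : forall a b, le a b -> le b a -> a = b;
  sup_ub : forall (P : car -> Prop) x, P x -> le x (sup P);
  sup_least : forall (P : car -> Prop) z, (forall x, P x -> le x z) -> le (sup P) z;
  mul_assoc : forall a b c, mul a (mul b c) = mul (mul a b) c;
  mul_comm : forall a b, mul a b = mul b a;
  mul_one : forall a, mul (sup (fun _ => True)) a = a;
  mul_sup : forall a (P : car -> Prop),
      mul a (sup P) = sup (fun y => exists x, P x /\ y = mul a x)
}.

Arguments le {m} _ _.
Arguments sup {m} _.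
Arguments mul {m} _ _.

Section Defs.
Variable L : MultLattice.

Definition top : L := sup (fun _ => True).
Definition bot : L := sup (fun _ => False).

Definition compact (x : L) : Prop :=
  forall P : L -> Prop, le x (sup P) ->
    exists l : list L, (forall y, In y l -> P y) /\ le x (sup (fun y => In y l)).

Definition compactly_generated : Prop :=
  forall a : L, a = sup (fun y => compact y /\ le y a).

Definition c_lattice : Prop :=
  compactly_generated /\ compact top /\
  (forall a b : L, compact a -> compact b -> compact (mul a b)).

Definition mult_closed (S : L -> Prop) : Prop :=
  (exists s, S s) /\ (forall s, S s -> compact s) /\
  (forall s t, S s -> S t -> S (mul s t)).

Fixpoint pow (y : L) (n : nat) : L :=
  match n with 0 => top | S n' => mul y (pow y n') end.

Definition colon (a b : L) : L := sup (fun y => le (mul y b) a).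

Definition rad (a : L) : L :=
  sup (fun y => compact y /\ exists n, 0 < n /\ le (pow y n) a).

Definition saturation (S : L -> Prop) (a : L) : L :=
  sup (fun y => exists s, S s /\ le (mul s y) a).

Definition proper (a : L) : Prop := a <> top.

Definition S_prime (S : L -> Prop) (p : L) : Prop :=
  proper p /\ (forall t, S t -> ~ le t p) /\
  exists s, S s /\ forall a b : L, le (mul a b) p -> le (mul s a) p \/ le (mul s b) p.

Definition S_primary (S : L -> Prop) (q : L) : Prop :=
  proper q /\ (forall t, S t -> ~ le t q) /\
  exists s, S s /\ forall c d : L, le (mul c d) q -> le (mul s c) q \/ le (mul s d) (rad q).

Definition S_p_primary (S : L -> Prop) (p q : L) : Prop :=
  S_primary S q /\ p = rad q /\ S_prime S p.

End Defs.
Arguments mult_closed {L} S.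
Arguments colon {L} a b.
Arguments rad {L} a.
Arguments saturation {L} S a.
Arguments S_prime {L} S p.
Arguments S_primary {L} S q.
Arguments S_p_primary {L} S p q.
Arguments proper {L} a.
Arguments compact {L} x.
Arguments pow {L} y n.

(** If y^n (s x) <= q, the S-primary witness s0 of q either gives s0 s x <= q,
    which is excluded, or s0 y^n <= sqrt q = p; the S-prime witness s1 of p then
    strips the factors of y^n one at a time and yields s1 y <= p.  So s1 bounds
    sqrt (q : s x) into p uniformly in s, and since p <= sqrt (q : s x) the two
    elements have the same S-saturation. *)
Set Implicit Arguments.

Section Residuation.
Variable L : MultLattice.

Lemma sup_mono (P Q : L -> Prop) : (forall x, P x -> Q x) -> le (sup P) (sup Q).
Proof. intros PQ. apply sup_least. intros x Px. apply sup_ub. auto. Qed.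

Lemma mul_mono_r (a b c : L) : le b c -> le (mul a b) (mul a c).
Proof.
  intros bc.
  assert (Ec : c = sup (fun y => y = b \/ y = c)).
  { apply le_antisym; [apply sup_ub; auto|].
    apply sup_least. intros y [-> | ->]; auto using le_refl. }
  rewrite Ec, mul_sup. apply sup_ub. exists b; auto.
Qed.

Lemma mul_mono_l (a b c : L) : le b c -> le (mul b a) (mul c a).
Proof. intros bc. rewrite (mul_comm _ b), (mul_comm _ c). now apply mul_mono_r. Qed.

Lemma mul_top_r (a : L) : mul a (top L) = a.
Proof. rewrite mul_comm. apply mul_one. Qed.

Lemma mul_le_l (a b : L) : le (mul a b) a.
Proof. rewrite <- (mul_top_r a) at 2. apply mul_mono_r, sup_ub. exact I. Qed.

Lemma colon_mulK (a b : L) : le (mul (colon a b) b) a.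
Proof.
  unfold colon. rewrite mul_comm, mul_sup. apply sup_least.
  intros y [z [zb ->]]. rewrite mul_comm. exact zb.
Qed.

Lemma le_colon (a b y : L) : le (mul y b) a -> le y (colon a b).
Proof. intros yb. now apply sup_ub. Qed.

Lemma le_colon_mul (a b y : L) : le (mul y b) a <-> le y (colon a b).
Proof.
  split; [apply le_colon|].
  intros ya. eapply le_trans; [apply mul_mono_l, ya | apply colon_mulK].
Qed.

Lemma colon_ge (a b : L) : le a (colon a b).
Proof. apply le_colon, mul_le_l. Qed.

Lemma rad_mono (a b : L) : le a b -> le (rad a) (rad b).
Proof.
  intros ab. apply sup_mono. intros y [cy [n [n_gt0 yn]]].
  split; [exact cy|]. exists n. split; [exact n_gt0 | eapply le_trans; eauto].
Qed.

End Residuation.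

Section Witnesses.
Variable L : MultLattice.
Variable S : L -> Prop.

Definition prime_witness (p s : L) : Prop :=
  forall a b : L, le (mul a b) p -> le (mul s a) p \/ le (mul s b) p.

Definition primary_witness (q s : L) : Prop :=
  forall c d : L, le (mul c d) q -> le (mul s c) q \/ le (mul s d) (rad q).

Lemma S_primary_colon (q b : L) :
  (exists t, S t) -> S_primary S q -> (forall t, S t -> ~ le (mul t b) q) ->
  S_primary S (colon q b).
Proof.
  intros [t0 St0] [_ [_ [s0 [Ss0 q_s0]]]] b_q.
  split; [|split].
  - intros E. apply (b_q t0 St0).
    eapply le_trans; [apply mul_mono_l | apply colon_mulK].
    rewrite E. apply sup_ub. exact I.
  - intros t St t_le. now apply (b_q t St), le_colon_mul.
  - exists s0. split; [exact Ss0|]. intros c d cd.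
    assert (cbd : le (mul (mul c b) d) q).
    { rewrite <- mul_assoc, (mul_comm _ b d), mul_assoc. now apply le_colon_mul. }
    destruct (q_s0 _ _ cbd) as [cb | d_rad].
    + left. apply le_colon. now rewrite <- mul_assoc.
    + right. eapply le_trans; [exact d_rad | apply rad_mono, colon_ge].
Qed.

Hypothesis S_mul : forall s t, S s -> S t -> S (mul s t).

Lemma prime_witness_pow (p s1 y : L) :
  prime_witness p s1 -> S s1 -> (forall t, S t -> ~ le t p) ->
  forall n u, S u -> le (mul u (pow y (Datatypes.S n))) p -> le (mul s1 y) p.
Proof.
  intros p_s1 Ss1 S_p n. induction n as [|n IH]; intros u Su uy.
  - simpl in uy. fold (top L) in uy. rewrite mul_top_r in uy.
    destruct (p_s1 _ _ uy) as [s1u | s1y]; [|exact s1y].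
    exfalso. exact (S_p _ (S_mul Ss1 Su) s1u).
  - change (pow y (Datatypes.S (Datatypes.S n)))
      with (mul y (pow y (Datatypes.S n))) in uy.
    rewrite (mul_comm _ y), mul_assoc in uy.
    destruct (p_s1 _ _ uy) as [s1u | s1y]; [|exact s1y].
    rewrite mul_assoc in s1u. exact (IH _ (S_mul Ss1 Su) s1u).
Qed.

Lemma rad_colon_witness (q b s0 s1 : L) :
  primary_witness q s0 -> S s0 -> prime_witness (rad q) s1 -> S s1 ->
  (forall t, S t -> ~ le t (rad q)) -> (forall t, S t -> ~ le (mul t b) q) ->
  le (mul s1 (rad (colon q b))) (rad q).
Proof.
  intros q_s0 Ss0 p_s1 Ss1 S_p b_q.
  unfold rad at 1. rewrite mul_sup. apply sup_least.
  intros z [y [[_ [n [n_gt0 yn]]] ->]].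
  assert (byn : le (mul b (pow y n)) q) by (rewrite mul_comm; now apply le_colon_mul).
  destruct (q_s0 _ _ byn) as [s0b | s0yn]; [now destruct (b_q s0 Ss0)|].
  destruct n as [|n]; [inversion n_gt0|].
  exact (prime_witness_pow y p_s1 Ss1 S_p n Ss0 s0yn).
Qed.

Lemma saturation_eq (a b t : L) :
  le a b -> S t -> le (mul t b) a -> saturation S b = saturation S a.
Proof.
  intros ab St tb. apply le_antisym; apply sup_mono; intros z [u [Su uz]].
  - exists (mul t u). split; [now apply S_mul|].
    rewrite <- mul_assoc. eapply le_trans; [apply mul_mono_r, uz | exact tb].
  - exists u. split; [exact Su | eapply le_trans; eauto].
Qed.

End Witnesses.

Theorem mainTheorem13 (L : MultLattice) (S : L -> Prop) (p q x : L) :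
  c_lattice L ->
  mult_closed S -> S (top L) -> ~ S (bot L) ->
  S_p_primary S p q ->
  (forall s, S s -> ~ le (mul s x) q) ->
  (forall s, S s -> S_primary S (colon q (mul s x))) /\
  (exists t, S t /\ forall s, S s ->
      le (mul t (rad (colon q (mul s x)))) p /\ le p (rad (colon q (mul s x)))) /\
  saturation S (rad (colon q x)) = saturation S p.
Proof.
  intros _ [S_ne [_ S_mul]] _ _ [q_primary [-> [_ [S_p [s1 [Ss1 p_s1]]]]]] x_q.
  pose proof q_primary as [_ [_ [s0 [Ss0 q_s0]]]].
  assert (sx_q : forall s, S s -> forall t, S t -> ~ le (mul t (mul s x)) q).
  { intros s Ss t St. rewrite mul_assoc. now apply x_q, S_mul. }
  split; [|split].
  - intros s Ss. now apply S_primary_colon, sx_q.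
  - exists s1. split; [exact Ss1|]. intros s Ss. split.
    + now apply (rad_colon_witness S S_mul (mul s x) q_s0 Ss0 p_s1 Ss1 S_p), sx_q.
    + apply rad_mono, colon_ge.
  - apply (saturation_eq L S S_mul _ _ s1).
    + apply rad_mono, colon_ge.
    + exact Ss1.
    + exact (rad_colon_witness S S_mul x q_s0 Ss0 p_s1 Ss1 S_p x_q).
Qed.
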